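(* Consider a random family with random number of children $N\ge 1$ and sexes $S_1,S_2,\dots\in\{\mathrm{M},\mathrm{F}\}$ of its children in birth order ($S_k$ defined on the event $N\ge k$). Assume: (i) (random coin toss) there is $p_M\in(0,1)$ such that $P(S_1=\mathrm{M})=p_M$ and, for every $k\ge 2$, $P(S_k=\mathrm{M}\mid N\ge k, S_1,\dots,S_{k-1})=p_M$; write $p_F=1-p_M$; (ii) the sex of the first child does not predict whether the family has a second child: $P(N\ge 2\mid S_1=\mathrm{M})=P(N\ge2\mid S_1=\mathrm{F})$; (iii) there are numbers $p_S>0$ and $p_D$ with $P(N\ge 3\mid N\ge 2, S_1=S_2=\mathrm{M})=P(N\ge 3\mid N\ge 2, S_1=S_2=\mathrm{F})=p_S$ and $P(N\ge 3\mid N\ge 2, S_1=\mathrm{M},S_2=\mathrm{F})=P(N\ge 3\mid N\ge 2, S_1=\mathrm{F},S_2=\mathrm{M})=p_D$. Then \[ P\left(\text{MM? or FF?}\mid N\geq 3\right) =\frac{1}{2 p_Fp_M p_D/p_S +p_F^2+p_M^2}\bigl(p_M^2+p_F^2\bigr). \] If additionally $p_S>p_D$, then \[ \frac{1}{2 p_Fp_M p_D/p_S +p_F^2+p_M^2}>1. \]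
   Context: All births are singletons. ''MM?'' denotes the event $S_1=S_2=\mathrm{M}$ (the sex of the third child is ignored), and ''FF?'' denotes $S_1=S_2=\mathrm{F}$; these are considered together with the conditioning event $N\ge 3$. All conditioning events appearing are assumed to have positive probability. *)

From HB Require Import structures.
From mathcomp Require Import all_boot all_order all_algebra.
From mathcomp Require Import all_classical all_reals all_analysis.
Set Implicit Arguments. Unset Strict Implicit. Unset Printing Implicit Defensive.
Import Order.TTheory GRing.Theory Num.Theory.
Local Open Scope classical_set_scope.
Local Open Scope ring_scope.

Definition Pr {d} {T : measurableType d} {R : realType}
  (P : probability T R) (A : set T) : R := fine (P A).

Definition cond {d} {T : measurableType d} {R : realType}
  (P : probability T R) (A B : set T) : R := Pr P (A `&` B) / Pr P B.

From HB Require Import structures.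
From mathcomp Require Import all_boot all_order all_algebra.
From mathcomp Require Import all_classical all_reals all_analysis.
From mathcomp Require Import ring lra.
Import Order.TTheory GRing.Theory Num.Theory.
Local Open Scope classical_set_scope.
Local Open Scope ring_scope.

(* Each event {N >= 3, S1 = a, S2 = b} has probability c_ab * q * p_a * p_b:
   q = P(N >= 2 | S1), the same for both sexes by (ii); p_a p_b from the coin
   toss (i); c_ab = pS or pD by (iii).  Hence q cancels and the conditional
   probability of a same-sex pair is pS (pM^2 + pF^2) / (pS (pM^2 + pF^2) +
   2 pD pM pF).  As pM^2 + pF^2 + 2 pM pF = 1, the denominator of the factor
   equals 1 - 2 pM pF (1 - pD/pS), which is < 1 when pD < pS. *)

Section Probability.
Context {d : measure_display} {T : measurableType d} {R : realType}.
Variable P : probability T R.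

Lemma Pr_ge0 (A : set T) : 0 <= Pr P A.
Proof. exact/fine_ge0/measure_ge0. Qed.

Lemma Pr_setT : Pr P setT = 1.
Proof. by rewrite /Pr probability_setT. Qed.

Lemma cond_ge0 (A B : set T) : 0 <= cond P A B.
Proof. exact/divr_ge0/Pr_ge0/Pr_ge0. Qed.

Lemma PrI_cond (A B : set T) : 0 < Pr P B -> Pr P (A `&` B) = cond P A B * Pr P B.
Proof. by move=> B_gt0; rewrite /cond divfK ?gt_eqF. Qed.

Lemma Pr_split_bool (A : set T) (f : T -> bool) :
  measurable (A `&` [set w | f w = true]) ->
  measurable (A `&` [set w | f w = false]) ->
  Pr P A = Pr P (A `&` [set w | f w = true]) + Pr P (A `&` [set w | f w = false]).
Proof.
move=> mAt mAf.
have AE : A = (A `&` [set w | f w = true]) `|` (A `&` [set w | f w = false]).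
  apply/seteqP; split=> [w Aw | w [] [] //].
  by case Efw: (f w); [left | right].
rewrite {1}AE /Pr measureU //; first by rewrite fineD ?fin_num_measure.
by apply/seteqP; split=> w // [[_ /= ->] [_]].
Qed.

End Probability.

Lemma same_sex_factor_gt1 (F : realFieldType) (pM pS pD : F) :
  let pF := 1 - pM in 0 < pM < 1 -> 0 <= pD -> pD < pS ->
  1 < (2 * pF * pM * pD / pS + pF ^+ 2 + pM ^+ 2)^-1.
Proof.
move=> pF /andP[pM_gt0 pM_lt1] pD_ge0 pD_lt_pS.
have pS_gt0 : 0 < pS := le_lt_trans pD_ge0 pD_lt_pS.
have pF_gt0 : 0 < pF by rewrite subr_gt0.
have den_gt0 : 0 < 2 * pF * pM * pD / pS + pF ^+ 2 + pM ^+ 2.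
  apply: ltr_wpDl; last exact: exprn_gt0.
  by rewrite addr_ge0 ?sqr_ge0 ?divr_ge0 ?mulr_ge0 ?ler0n ?(ltW pF_gt0) ?(ltW pM_gt0)
    ?(ltW pS_gt0).
have denE : 2 * pF * pM * pD / pS + pF ^+ 2 + pM ^+ 2 = 1 - 2 * (pF * pM) * (1 - pD / pS).
  by rewrite /pF; ring.
have defect_gt0 : 0 < 2 * (pF * pM) * (1 - pD / pS).
  by rewrite !mulr_gt0 ?ltr0n // subr_gt0 ltr_pdivrMr // mul1r.
by rewrite invf_gt1 // denE; lra.
Qed.

Section Family.
Variables (R : realType) (d : measure_display) (T : measurableType d).
Variables (P : probability T R) (N : T -> nat) (S : nat -> T -> bool).
Hypothesis N_ge1 : forall w, (1 <= N w)%N.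
Hypothesis measurable_atleast : forall k, measurable [set w | (k <= N w)%N].
Hypothesis measurable_sex : forall k b, measurable [set w | (k <= N w)%N /\ S k w = b].

Definition atleast2_first (a : bool) := [set w | (2 <= N w)%N /\ S 1%N w = a].
Definition atleast2_pair (a b : bool) :=
  [set w | (2 <= N w)%N /\ S 1%N w = a /\ S 2%N w = b].
Definition atleast3_pair (a b : bool) := [set w | (3 <= N w)%N] `&` atleast2_pair a b.

Lemma measurable_first (a : bool) : measurable [set w | S 1%N w = a].
Proof.
suff -> : [set w | S 1%N w = a] = [set w | (1 <= N w)%N /\ S 1%N w = a] by [].
by apply/seteqP; split=> [w /= -> | w [] //]; rewrite N_ge1.
Qed.

Lemma atleast2_pairE (a b : bool) : atleast2_pair a b =
  [set w | (2 <= N w)%N] `&` [set w | S 1%N w = a] `&` [set w | (2 <= N w)%N /\ S 2%N w = b].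
Proof. by apply/seteqP; split=> w /= => [[? [? ?]] | [[? ?] [? ?]]]. Qed.

Lemma measurable_atleast2_pair (a b : bool) : measurable (atleast2_pair a b).
Proof. by rewrite atleast2_pairE; do 2?apply: measurableI => //; apply: measurable_first. Qed.

Lemma measurable_atleast3_pair (a b : bool) : measurable (atleast3_pair a b).
Proof. exact/measurableI/measurable_atleast2_pair. Qed.

Lemma Pr_atleast2_first_split (a : bool) :
  Pr P (atleast2_first a) = Pr P (atleast2_pair a true) + Pr P (atleast2_pair a false).
Proof.
have firstI b : atleast2_first a `&` [set w | S 2%N w = b] = atleast2_pair a b.
  by apply/seteqP; split=> w /= => [[[? ?] ?] | [? [? ?]]].
by rewrite (Pr_split_bool _ _ (S 2%N)) !firstI //; apply: measurable_atleast2_pair.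
Qed.

Lemma Pr_atleast3_split : Pr P [set w | (3 <= N w)%N] =
  Pr P (atleast3_pair true true) + Pr P (atleast3_pair true false) +
  Pr P (atleast3_pair false true) + Pr P (atleast3_pair false false).
Proof.
have pairI a b : [set w | (3 <= N w)%N] `&` [set w | S 1%N w = a] `&` [set w | S 2%N w = b]
    = atleast3_pair a b.
  apply/seteqP; split=> w /= => [[[N3 ?] ?] | [N3 [_ [? ?]]]] //.
  by split=> //; split=> //; apply: ltnW.
have m3first a : measurable ([set w | (3 <= N w)%N] `&` [set w | S 1%N w = a]).
  exact/measurableI/measurable_first.
rewrite (Pr_split_bool _ _ (S 1%N)) //.
by rewrite !(Pr_split_bool _ (_ `&` [set w | S 1%N w = _]) (S 2%N)) ?pairI ?addrA //;
  apply: measurable_atleast3_pair.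
Qed.

Lemma Pr_same_sex_atleast3 :
  Pr P ([set w | S 1%N w = S 2%N w] `&` [set w | (3 <= N w)%N]) =
  Pr P (atleast3_pair true true) + Pr P (atleast3_pair false false).
Proof.
have sameI a : [set w | S 1%N w = S 2%N w] `&` [set w | (3 <= N w)%N] `&`
    [set w | S 1%N w = a] = atleast3_pair a a.
  apply/seteqP; split=> w /= => [[[S12 N3] S1a] | [N3 [_ [-> ->]]]] //.
  by split=> //; rewrite /atleast2_pair /= -S12 S1a; split=> //; apply: ltnW.
by rewrite (Pr_split_bool _ _ (S 1%N)) !sameI //; apply: measurable_atleast3_pair.
Qed.

Variable pM : R.
Hypothesis pM_01 : 0 < pM < 1.
Hypothesis Pr_first_male : Pr P [set w | (1 <= N w)%N /\ S 1%N w = true] = pM.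
Hypothesis coin_toss : forall (k : nat) (s : seq bool), (2 <= k)%N -> size s = k.-1 ->
  0 < Pr P [set w | (k <= N w)%N /\ forall i, (i < k.-1)%N -> S i.+1 w = nth false s i] ->
  cond P [set w | S k w = true]
    [set w | (k <= N w)%N /\ forall i, (i < k.-1)%N -> S i.+1 w = nth false s i] = pM.
Hypothesis second_child_indep :
  cond P [set w | (2 <= N w)%N] [set w | S 1%N w = true]
  = cond P [set w | (2 <= N w)%N] [set w | S 1%N w = false].
Hypothesis Pr_atleast2_pair_gt0 : forall a b, 0 < Pr P (atleast2_pair a b).

Definition sex_prob (b : bool) : R := if b then pM else 1 - pM.

Lemma sex_prob_gt0 (b : bool) : 0 < sex_prob b.
Proof. by case/andP: pM_01; case: b => //= _; rewrite subr_gt0. Qed.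

Lemma Pr_first (b : bool) : Pr P [set w | S 1%N w = b] = sex_prob b.
Proof.
have Pr_male : Pr P [set w | S 1%N w = true] = pM.
  rewrite -Pr_first_male; congr Pr.
  by apply/seteqP; split=> [w /= -> | w [] //]; rewrite N_ge1.
case: b => //=; apply/eqP; rewrite -Pr_male eq_sym subr_eq addrC -(Pr_setT P).
by rewrite (Pr_split_bool _ _ (S 1%N)) ?setTI //; apply: measurable_first.
Qed.

Lemma Pr_atleast2_first (a : bool) : Pr P (atleast2_first a) =
  cond P [set w | (2 <= N w)%N] [set w | S 1%N w = true] * sex_prob a.
Proof.
rewrite [LHS](PrI_cond P [set w | (2 <= N w)%N]) Pr_first ?sex_prob_gt0 //.
by case: a; rewrite // second_child_indep.
Qed.

Lemma Pr_atleast2_first_gt0 (a : bool) : 0 < Pr P (atleast2_first a).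
Proof. by rewrite Pr_atleast2_first_split addr_gt0. Qed.

Lemma Pr_atleast2_pair (a b : bool) :
  Pr P (atleast2_pair a b) = sex_prob b * Pr P (atleast2_first a).
Proof.
have prefixE : [set w | (2 <= N w)%N /\
    forall i, (i < 2.-1)%N -> S i.+1 w = nth false [:: a] i] = atleast2_first a.
  apply/seteqP; split=> w [N2 Sw]; split=> //; first exact: (Sw 0%N).
  by case.
have Pr_male : Pr P (atleast2_pair a true) = pM * Pr P (atleast2_first a).
  have := coin_toss 2 [:: a] isT erefl.
  rewrite prefixE => /(_ (Pr_atleast2_first_gt0 a)) <-.
  rewrite -PrI_cond ?Pr_atleast2_first_gt0 //; congr Pr.
  by apply/seteqP; split=> w /= => [[? [? ?]] | [? [? ?]]].
case: b => //=.
by rewrite mulrBl mul1r -Pr_male Pr_atleast2_first_split addrC addKr.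
Qed.

Variables pS pD : R.
Hypothesis stop_same : forall a, cond P [set w | (3 <= N w)%N] (atleast2_pair a a) = pS.
Hypothesis stop_diff : forall a, cond P [set w | (3 <= N w)%N] (atleast2_pair a (~~ a)) = pD.

Lemma Pr_atleast3_pair (a b : bool) :
  Pr P (atleast3_pair a b) = (if a == b then pS else pD) * Pr P (atleast2_pair a b).
Proof.
rewrite /atleast3_pair PrI_cond ?Pr_atleast2_pair_gt0 //.
by case: a b => -[] /=; rewrite ?stop_same ?stop_diff.
Qed.

Lemma cond_same_sex_atleast3 : 0 < pS -> let pF := 1 - pM in
  cond P [set w | S 1%N w = S 2%N w] [set w | (3 <= N w)%N]
    = (2 * pF * pM * pD / pS + pF ^+ 2 + pM ^+ 2)^-1 * (pM ^+ 2 + pF ^+ 2).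
Proof.
move=> pS_gt0 pF.
have pM_gt0 : 0 < pM := sex_prob_gt0 true.
have pF_gt0 : 0 < pF := sex_prob_gt0 false.
have pD_ge0 : 0 <= pD by rewrite -(stop_diff true) cond_ge0.
rewrite /cond Pr_same_sex_atleast3 Pr_atleast3_split !Pr_atleast3_pair.
rewrite !Pr_atleast2_pair !Pr_atleast2_first /= -/pF.
set q := cond _ _ _.
have q_gt0 : 0 < q.
  by have := Pr_atleast2_first_gt0 true; rewrite Pr_atleast2_first pmulr_lgt0.
have den_gt0 : 0 < 2 * pF * pM * pD + pF ^+ 2 * pS + pM ^+ 2 * pS.
  apply: ltr_wpDl; last by rewrite mulr_gt0 ?exprn_gt0.
  by rewrite addr_ge0 ?mulr_ge0 ?ler0n ?sqr_ge0 ?(ltW pF_gt0) ?(ltW pM_gt0) ?(ltW pS_gt0).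
field; rewrite !gt_eqF //=.
rewrite [X in 0 < X](_ : _ = q * (2 * pF * pM * pD + pF ^+ 2 * pS + pM ^+ 2 * pS)).
  exact: mulr_gt0.
ring.
Qed.

End Family.

Theorem theorem2 (R : realType) (d : measure_display) (T : measurableType d)
  (P : probability T R) (N : T -> nat) (S : nat -> T -> bool)
  (pM pS pD : R)
  (hN1 : forall w, (1 <= N w)%N)
  (mN : forall k, measurable [set w | (k <= N w)%N])
  (mS : forall k b, measurable [set w | (k <= N w)%N /\ S k w = b])
  (hpM : 0 < pM < 1)
  (hi1 : Pr P [set w | (1 <= N w)%N /\ S 1%N w = true] = pM)
  (hik : forall (k : nat) (s : seq bool), (2 <= k)%N -> size s = k.-1 ->
     0 < Pr P [set w | (k <= N w)%N /\
                 forall i, (i < k.-1)%N -> S i.+1 w = nth false s i] ->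
     cond P [set w | S k w = true]
            [set w | (k <= N w)%N /\
                 forall i, (i < k.-1)%N -> S i.+1 w = nth false s i] = pM)
  (hii : cond P [set w | (2 <= N w)%N] [set w | S 1%N w = true]
       = cond P [set w | (2 <= N w)%N] [set w | S 1%N w = false])
  (hpS : 0 < pS)
  (hpos2 : forall a b : bool,
     0 < Pr P [set w | (2 <= N w)%N /\ S 1%N w = a /\ S 2%N w = b])
  (hpos3 : 0 < Pr P [set w | (3 <= N w)%N])
  (hiiiS : forall a : bool,
     cond P [set w | (3 <= N w)%N]
            [set w | (2 <= N w)%N /\ S 1%N w = a /\ S 2%N w = a] = pS)
  (hiiiD : forall a : bool,
     cond P [set w | (3 <= N w)%N]
            [set w | (2 <= N w)%N /\ S 1%N w = a /\ S 2%N w = ~~ a] = pD) :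
  let pF := 1 - pM in
  cond P [set w | S 1%N w = S 2%N w] [set w | (3 <= N w)%N]
    = (2 * pF * pM * pD / pS + pF ^+ 2 + pM ^+ 2)^-1 * (pM ^+ 2 + pF ^+ 2)
  /\ (pD < pS -> 1 < (2 * pF * pM * pD / pS + pF ^+ 2 + pM ^+ 2)^-1).
Proof.
have pD_ge0 : 0 <= pD by rewrite -(hiiiD true) cond_ge0.
move=> pF; split.
  exact: (@cond_same_sex_atleast3 R d T P N S hN1 mN mS pM hpM hi1 hik hii hpos2
            pS pD hiiiS hiiiD hpS).
exact: same_sex_factor_gt1.
Qed.
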